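(* For $j\in\{1,\dots,n\}$, let $g^{\mathrm{in}}_j$ be the restriction of $\chi_{\tau_j}$ with top point $\tau_j=(\tau_j^1,\tau_j^2)$ to $X_j=[q_j^l,q_j^u]$, where $q_j^l\le\tau_j^1\le q_j^u$. Write $\tau^1=(\tau_j^1)_{j},\tau^2=(\tau_j^2)_j,q^l=(q^l_j)_j,q^u=(q^u_j)_j\in\mathbb{R}^n$. Then: (i) $g^{\mathrm{out}}=\star\{(g^{\mathrm{in}}_j,X_j)\}_{j=1}^n$ is the restriction of the $\chi$ function with top point $(\mathbf{1}^\top\tau^1,\mathbf{1}^\top\tau^2)$ to the domain $[\mathbf{1}^\top q^l,\mathbf{1}^\top q^u]$; (ii) the set of maximizers in the definition of $g^{\mathrm{out}}(z)$ is $\{x^*\in[q^l,\tau^1]:\mathbf{1}^\top x^*=z\}$ if $\mathbf{1}^\top q^l\le z<\mathbf{1}^\top\tau^1$, is $\{\tau^1\}$ if $z=\mathbf{1}^\top\tau^1$, and is $\{x^*\in[\tau^1,q^u]:\mathbf{1}^\top x^*=z\}$ if $\mathbf{1}^\top\tau^1<z\le\mathbf{1}^\top q^u$.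
   Context: For $\tau=(\tau_1,\tau_2)\in\mathbb{R}^2$, $\chi_\tau(x)=x-\tau_1+\tau_2$ for $x\le\tau_1$ and $\chi_\tau(x)=-x+\tau_1+\tau_2$ for $x>\tau_1$; $\tau$ is its top point. The operator $\star$: given $g_j:X_j\to\mathbb{R}$, $j=1,\dots,n$, $\star\{(g_j,X_j)\}_{j=1}^n$ is the function with domain the Minkowski sum $\sum_jX_j$ defined by $z\mapsto\max\{\sum_jg_j(x_j):x\in\mathbb{R}^n,\ \mathbf{1}^\top x=z,\ x_j\in X_j\ \forall j\}$. For vectors, $[a,b]=\{x:a\le x\le b\}$ componentwise; $\mathbf{1}$ is the all-ones vector. *)

From HB Require Import structures.
From mathcomp Require Import all_boot all_order all_algebra.
From mathcomp Require Import classical_sets reals.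
Set Implicit Arguments. Unset Strict Implicit. Unset Printing Implicit Defensive.
Import Order.TTheory GRing.Theory Num.Theory.
Local Open Scope ring_scope.
Local Open Scope classical_set_scope.

Section Defs.
Variable R : realType.

Definition chi (t1 t2 : R) (x : R) : R :=
  if x <= t1 then x - t1 + t2 else - x + t1 + t2.

Definition box n (a b : 'I_n -> R) : set ('I_n -> R) :=
  [set x | forall j, a j <= x j <= b j].

Definition star_feas n (X : 'I_n -> set R) (z : R) : set ('I_n -> R) :=
  [set x | \sum_(j < n) x j = z /\ forall j, X j (x j)].

Definition minkowski_sum n (X : 'I_n -> set R) : set R :=
  [set z | exists x, star_feas X z x].

Definition star_obj n (g : 'I_n -> R -> R) (x : 'I_n -> R) : R :=
  \sum_(j < n) g j (x j).

Definition star_value n (g : 'I_n -> R -> R) (X : 'I_n -> set R) (z v : R) : Prop :=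
  (exists2 x, star_feas X z x & star_obj g x = v) /\
  (forall x, star_feas X z x -> star_obj g x <= v).

Definition star_argmax n (g : 'I_n -> R -> R) (X : 'I_n -> set R) (z : R)
  : set ('I_n -> R) :=
  [set x | star_feas X z x /\ forall y, star_feas X z y -> star_obj g y <= star_obj g x].

End Defs.

From HB Require Import structures.
From mathcomp Require Import all_boot all_order all_algebra.
From mathcomp Require Import classical_sets reals boolp.
From mathcomp Require Import ring.
Set Implicit Arguments. Unset Strict Implicit. Unset Printing Implicit Defensive.
Import Order.TTheory GRing.Theory Num.Theory.
Local Open Scope ring_scope.
Local Open Scope classical_set_scope.

(* Since chi_tau(x) = tau2 - |x - tau1|, the objective at a feasible x equals
   sum tau2 - sum_j |x_j - tau1_j|, which the triangle inequality bounds by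
   sum tau2 - |z - sum tau1|, the chi function with the summed top point.
   Equality holds exactly when all deviations x_j - tau1_j have the sign of
   z - sum tau1, and such points exist: a convex combination of q^l and tau1
   (or of tau1 and q^u) has any prescribed sum in between. *)

Lemma sum_norm_eq_npos (R : realDomainType) (I : finType) (d : I -> R) :
  \sum_i d i <= 0 -> \sum_i `|d i| = `|\sum_i d i| <-> forall i, d i <= 0.
Proof.
move=> sum_le0; rewrite ler0_norm // -sumrN; split.
  move=> e i; have d_norm_ge0 j : true -> 0 <= `|d j| + d j.
    by move=> _; rewrite -lerBlDr sub0r -normrN ler_norm.
  have sum_eq0 : \sum_j (`|d j| + d j) = 0.
    by rewrite big_split /= e sumrN addNr.
  have /eqP := psumr_eq0P d_norm_ge0 sum_eq0 (i := i) isT.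
  by rewrite addrC addr_eq0 => /eqP ->; rewrite oppr_le0.
by move=> d_le0; apply: eq_bigr => i _; rewrite ler0_norm.
Qed.

Lemma sum_norm_eq_nneg (R : realDomainType) (I : finType) (d : I -> R) :
  0 <= \sum_i d i -> \sum_i `|d i| = `|\sum_i d i| <-> forall i, 0 <= d i.
Proof.
move=> sum_ge0; have := @sum_norm_eq_npos R I (fun i => - d i).
rewrite sumrN normrN oppr_le0 => /(_ sum_ge0).
under eq_bigr do rewrite normrN.
by move=> ->; split=> d_ge0 i; move: (d_ge0 i); rewrite oppr_le0.
Qed.

Lemma exists_box_sum (R : realFieldType) (I : finType) (a b : I -> R) z :
  (forall i, a i <= b i) -> \sum_i a i <= z <= \sum_i b i ->
  exists2 x : I -> R, (forall i, a i <= x i <= b i) & \sum_i x i = z.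
Proof.
move=> ab /andP[az zb].
have [sab|sab] := eqVneq (\sum_i a i) (\sum_i b i).
  exists a => [i|]; first by rewrite lexx ab.
  by apply/eqP; rewrite eq_le az sab.
have sab_gt0 : 0 < \sum_i b i - \sum_i a i.
  by rewrite subr_gt0 lt_neqAle sab (le_trans az zb).
pose l := (z - \sum_i a i) / (\sum_i b i - \sum_i a i).
have l_ge0 : 0 <= l by apply: divr_ge0; [rewrite subr_ge0 | exact: ltW].
have l_le1 : l <= 1 by rewrite /l ler_pdivrMr // mul1r lerD2r.
exists (fun i => a i + l * (b i - a i)) => [i|].
  have ba_ge0 : 0 <= b i - a i by rewrite subr_ge0.
  by rewrite lerDl mulr_ge0 //= -lerBrDl ler_piMl.
by rewrite big_split /= -mulr_sumr sumrB divfK ?gt_eqF //; ring.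
Qed.

Lemma star_argmaxE (R : realType) n (g : 'I_n -> R -> R) (X : 'I_n -> set R) z v :
  star_value g X z v ->
  star_argmax g X z = [set x | star_feas X z x /\ star_obj g x = v].
Proof.
move=> [[y feas_y <-] y_max]; apply/seteqP; split=> x [feas_x].
  by move=> x_max; split=> //; apply/eqP; rewrite eq_le y_max // x_max.
by move=> obj_x; split=> // y' /y_max; rewrite obj_x.
Qed.

Section ChiStar.
Variables (R : realType) (n : nat).

Lemma chiE (c1 c2 x : R) : chi c1 c2 x = c2 - `|x - c1|.
Proof.
rewrite /chi; case: ifP => [x_le|/negbT].
  by rewrite ler0_norm ?subr_le0 //; ring.
by rewrite -ltNge => x_gt; rewrite gtr0_norm ?subr_gt0 //; ring.
Qed.

Lemma star_feas_itv (a b : 'I_n -> R) z x :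
  star_feas (fun j => `[a j, b j]) z x <-> box a b x /\ \sum_j x j = z.
Proof.
by split=> -[xa xb]; split=> // j; move: (xa j); rewrite /= in_itv.
Qed.

Lemma minkowski_sum_itv (a b : 'I_n -> R) : (forall j, a j <= b j) ->
  minkowski_sum (fun j => `[a j, b j]) = `[\sum_j a j, \sum_j b j].
Proof.
move=> ab; apply/seteqP; split=> z /=; rewrite in_itv /=.
  move=> [x /star_feas_itv[x_box <-]].
  by apply/andP; split; apply: ler_sum => j _; case/andP: (x_box j).
by move=> /(exists_box_sum ab)[x x_box xz]; exists x; apply/star_feas_itv.
Qed.

Variables (t1 t2 : 'I_n -> R).

Let g j := chi (t1 j) (t2 j).
Let chi_sum := chi (\sum_j t1 j) (\sum_j t2 j).

Lemma star_obj_chi x :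
  star_obj g x = \sum_j t2 j - \sum_j `|x j - t1 j|.
Proof. by rewrite /star_obj /g -sumrB; apply: eq_bigr => j _; rewrite chiE. Qed.

Lemma chi_sumE x :
  chi_sum (\sum_j x j) = \sum_j t2 j - `|\sum_j (x j - t1 j)|.
Proof. by rewrite /chi_sum chiE sumrB. Qed.

Lemma star_obj_chi_le x : star_obj g x <= chi_sum (\sum_j x j).
Proof. by rewrite star_obj_chi chi_sumE lerD2l lerN2 ler_norm_sum. Qed.

Lemma star_obj_chi_eq x :
  star_obj g x = chi_sum (\sum_j x j) <->
  \sum_j `|x j - t1 j| = `|\sum_j (x j - t1 j)|.
Proof.
rewrite star_obj_chi chi_sumE; split=> [e|->] //.
by apply: oppr_inj; apply: (addrI (\sum_j t2 j)).
Qed.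

Lemma star_obj_chi_eq_below x : \sum_j x j <= \sum_j t1 j ->
  star_obj g x = chi_sum (\sum_j x j) <-> forall j, x j <= t1 j.
Proof.
rewrite -subr_le0 -sumrB star_obj_chi_eq => /sum_norm_eq_npos ->.
by split=> x_t1 j; move: (x_t1 j); rewrite subr_le0.
Qed.

Lemma star_obj_chi_eq_above x : \sum_j t1 j <= \sum_j x j ->
  star_obj g x = chi_sum (\sum_j x j) <-> forall j, t1 j <= x j.
Proof.
rewrite -subr_ge0 -sumrB star_obj_chi_eq => /sum_norm_eq_nneg ->.
by split=> t1_x j; move: (t1_x j); rewrite subr_ge0.
Qed.

Variables (ql qu : 'I_n -> R).
Hypothesis q_t1 : forall j, ql j <= t1 j <= qu j.

Let X j := `[ql j, qu j].

Let ql_t1 j : ql j <= t1 j. Proof. by case/andP: (q_t1 j). Qed.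
Let t1_qu j : t1 j <= qu j. Proof. by case/andP: (q_t1 j). Qed.

Let box_below x : box ql t1 x -> box ql qu x.
Proof. by move=> x_box j; case/andP: (x_box j) => -> /le_trans->. Qed.

Let box_above x : box t1 qu x -> box ql qu x.
Proof. by move=> x_box j; case/andP: (x_box j) => /(le_trans (ql_t1 j)) -> ->. Qed.

Lemma star_value_chi z : \sum_j ql j <= z <= \sum_j qu j ->
  star_value g X z (chi_sum z).
Proof.
move=> /andP[qlz zqu]; split; last first.
  by move=> x /star_feas_itv[_ <-]; apply: star_obj_chi_le.
have [z_le|/ltW z_ge] := leP z (\sum_j t1 j).
  have [|x x_box xz] := exists_box_sum ql_t1 (z := z); first by rewrite qlz.
  exists x; first by apply/star_feas_itv; split=> //; apply: box_below.
  by rewrite -xz star_obj_chi_eq_below ?xz // => j; case/andP: (x_box j).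
have [|x x_box xz] := exists_box_sum t1_qu (z := z); first by rewrite z_ge.
exists x; first by apply/star_feas_itv; split=> //; apply: box_above.
by rewrite -xz star_obj_chi_eq_above ?xz // => j; case/andP: (x_box j).
Qed.

Lemma star_argmax_chi_below z : \sum_j ql j <= z <= \sum_j t1 j ->
  star_argmax g X z = box ql t1 `&` [set x | \sum_j x j = z].
Proof.
move=> /andP[qlz zt1].
have zqu : z <= \sum_j qu j by rewrite (le_trans zt1) // ler_sum.
rewrite (star_argmaxE (star_value_chi _)) ?qlz //; apply/seteqP; split=> x /=.
  move=> [/star_feas_itv[x_box xz]]; rewrite -xz star_obj_chi_eq_below ?xz //.
  by move=> x_t1; split=> // j; case/andP: (x_box j) => -> _; rewrite x_t1.
move=> [x_box xz]; split; first by apply/star_feas_itv; split=> //; apply: box_below.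
by rewrite -xz star_obj_chi_eq_below ?xz // => j; case/andP: (x_box j).
Qed.

Lemma star_argmax_chi_above z : \sum_j t1 j <= z <= \sum_j qu j ->
  star_argmax g X z = box t1 qu `&` [set x | \sum_j x j = z].
Proof.
move=> /andP[t1z zqu].
have qlz : \sum_j ql j <= z by rewrite (le_trans _ t1z) // ler_sum.
rewrite (star_argmaxE (star_value_chi _)) ?qlz //; apply/seteqP; split=> x /=.
  move=> [/star_feas_itv[x_box xz]]; rewrite -xz star_obj_chi_eq_above ?xz //.
  by move=> t1_x; split=> // j; case/andP: (x_box j) => _ ->; rewrite t1_x.
move=> [x_box xz]; split; first by apply/star_feas_itv; split=> //; apply: box_above.
by rewrite -xz star_obj_chi_eq_above ?xz // => j; case/andP: (x_box j).
Qed.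

End ChiStar.

Theorem lemma5 (R : realType) (n : nat) (tau1 tau2 ql qu : 'I_n -> R)
  (hq : forall j, ql j <= tau1 j <= qu j) :
  let X := fun j => `[ql j, qu j]%classic in
  let g := fun j => chi (tau1 j) (tau2 j) in
  let s := fun v : 'I_n -> R => \sum_(j < n) v j in
  (* (i) *)
  minkowski_sum X = `[s ql, s qu]%classic /\
  (forall z, s ql <= z <= s qu ->
     star_value g X z (chi (s tau1) (s tau2) z)) /\
  (* (ii) *)
  (forall z, s ql <= z < s tau1 ->
     star_argmax g X z = box ql tau1 `&` [set x | s x = z]) /\
  star_argmax g X (s tau1) = [set tau1] /\
  (forall z, s tau1 < z <= s qu ->
     star_argmax g X z = box tau1 qu `&` [set x | s x = z]).
Proof.
move=> X g s; rewrite {}/s.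
have ql_qu j : ql j <= qu j by case/andP: (hq j) => /le_trans; apply.
have ql_t1 : \sum_j ql j <= \sum_j tau1 j by apply: ler_sum => j _; case/andP: (hq j).
have t1_qu : \sum_j tau1 j <= \sum_j qu j by apply: ler_sum => j _; case/andP: (hq j).
split; first exact: minkowski_sum_itv.
split; first exact: star_value_chi.
split.
  move=> z /andP[qlz /ltW zt1].
  by apply: star_argmax_chi_below; rewrite ?qlz.
split; last first.
  move=> z /andP[/ltW t1z zqu].
  by apply: star_argmax_chi_above; rewrite ?t1z.
apply/seteqP; split=> x.
  move=> x_max; apply/funext => j; apply/le_anti.
  have := x_max; rewrite (star_argmax_chi_below tau2 hq) ?ql_t1 ?lexx // => -[x_t1 _].
  move: x_max; rewrite (star_argmax_chi_above tau2 hq) ?t1_qu ?lexx // => -[t1_x _].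
  by case/andP: (x_t1 j) => _ ->; case/andP: (t1_x j).
move=> /= ->; rewrite (star_argmax_chi_below tau2 hq) ?ql_t1 ?lexx //.
by split=> // j; case/andP: (hq j) => -> _; rewrite lexx.
Qed.
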